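(* Let $F\subsetneq K$ be fields of characteristic $0$, with $F$ a proper nonempty subfield of $K$. Let $p(x)=\sum_{k=0}^{n}a_k x^k\in K[x]$ be non-constant with $a_n\neq 0$, and let $q(x)=\sum_{j=0}^{m}b_j x^j\in K[x]$ with $b_m\neq 0$. Suppose $a_nb_m\in F$. Then $D_F(p\circ q)\geq D_F(q)$.
   Context: For sets $F\subset K$ and $p(x)=\sum_{k=0}^{n}a_kx^k\in K[x]$ with $a_n\neq 0$, the $F$ deficit $D_F(p)$ is defined as follows: if $p\in K[x]\setminus F[x]$, then $D_F(p)=n-\max\{0\le k\le n: a_k\notin F\}$; if $p\in F[x]$, then $D_F(p)=n$. Here $F[x]$ denotes the set of polynomials with all coefficients in $F$. *)

From HB Require Import structures.
From mathcomp Require Import all_boot all_order all_algebra.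
Set Implicit Arguments. Unset Strict Implicit. Unset Printing Implicit Defensive.
Import Order.TTheory GRing.Theory Num.Theory.
Local Open Scope ring_scope.

Definition deficit (K : fieldType) (F : {pred K}) (p : {poly K}) : nat :=
  if p \is a polyOver F then (size p).-1
  else ((size p).-1 - \max_(k < size p | (p`_k)%R \notin F) (k : nat))%N.

From HB Require Import structures.
From mathcomp Require Import all_boot all_order all_algebra.
From mathcomp Require Import zify.
Import GRing.Theory.
Local Open Scope ring_scope.

(* Let m = deg q and d = D_F(q) > 0, so the coefficients of q of index
   > m - d lie in F; in particular lead q is in F, hence so is lead p.
   This "top part in F" property is preserved by products (degrees and
   thresholds add up), by scaling with elements of F and by adding terms
   of degree <= deg - d.  In p o q = sum_k a_k q^k every term with k < n
   has degree <= (n - 1) m <= n m - d, and the term a_n q^n has its top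
   part in F, so the coefficients of p o q of index > n m - d lie in F. *)

(* [m < i + d] encodes [m - d < i] without truncated subtraction. *)
Definition top_coefs_in {R : nzSemiRingType} (S : {pred R}) (m d : nat)
    (p : {poly R}) : Prop :=
  forall i, (m < i + d)%N -> p`_i \in S.

Section TopCoefs.
Variables (R : nzSemiRingType) (S : semiringClosed R) (d : nat).

Lemma top_coefs_in_small (m : nat) (p : {poly R}) :
  (size p + d <= m.+1)%N -> top_coefs_in S m d p.
Proof.
move=> le_p i lt_mi; rewrite nth_default ?rpred0 //.
by rewrite -(leq_add2r d) (leq_trans le_p lt_mi).
Qed.

Lemma top_coefs_in0 (m : nat) : top_coefs_in S m d 0.
Proof. by move=> i _; rewrite coef0 rpred0. Qed.

Lemma top_coefs_in1 (m : nat) : top_coefs_in S m d 1.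
Proof. by move=> i _; rewrite coefC; case: eqP; rewrite ?rpred1 ?rpred0. Qed.

Lemma top_coefs_inD (m : nat) (p q : {poly R}) :
  top_coefs_in S m d p -> top_coefs_in S m d q -> top_coefs_in S m d (p + q).
Proof. by move=> Sp Sq i lt_mi; rewrite coefD rpredD ?Sp ?Sq. Qed.

Lemma top_coefs_inZ (m : nat) (c : R) (p : {poly R}) :
  c \in S -> top_coefs_in S m d p -> top_coefs_in S m d (c *: p).
Proof. by move=> Sc Sp i lt_mi; rewrite coefZ rpredM ?Sp. Qed.

Lemma top_coefs_inM (m n : nat) (p q : {poly R}) :
    (size p <= m.+1)%N -> (size q <= n.+1)%N ->
    top_coefs_in S m d p -> top_coefs_in S n d q ->
  top_coefs_in S (m + n) d (p * q).
Proof.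
move=> le_p le_q Sp Sq i lt_mni; rewrite coefM rpred_sum // => -[j /= lt_ji] _.
have [le_jm | lt_mj] := leqP j m; last first.
  by rewrite nth_default ?mul0r ?rpred0 // (leq_trans le_p lt_mj).
have [le_ijn | lt_nij] := leqP (i - j) n; first by rewrite rpredM ?Sp ?Sq //; lia.
by rewrite [q`__]nth_default ?mulr0 ?rpred0 // (leq_trans le_q lt_nij).
Qed.

Lemma top_coefs_inX (m k : nat) (q : {poly R}) :
    (size q <= m.+1)%N -> top_coefs_in S m d q ->
  top_coefs_in S (k * m) d (q ^+ k).
Proof.
move=> le_q Sq; elim: k => [|k IHk]; first by rewrite expr0; apply: top_coefs_in1.
rewrite exprSr mulSnr; apply: top_coefs_inM => //.
by apply: leq_trans (size_poly_exp_leq q k) _; rewrite ltnS mulnC leq_mul2l; lia.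
Qed.

Lemma top_coefs_in_comp (m : nat) (p q : {poly R}) :
    (d <= m)%N -> (size q <= m.+1)%N -> lead_coef p \in S ->
    top_coefs_in S m d q ->
  top_coefs_in S ((size p).-1 * m) d (p \Po q).
Proof.
move=> le_dm le_q Sp Sq; rewrite comp_polyE.
apply: (big_ind (top_coefs_in S _ d)) => [|r s|[k /= lt_kp] _].
- exact: top_coefs_in0.
- exact: top_coefs_inD.
have [lt_kn | ge_kn] := ltnP k (size p).-1.
  apply: top_coefs_in_small.
  apply: leq_trans (leq_add (size_scale_leq _ _) (leqnn d)) _.
  apply: leq_trans (leq_add (size_poly_exp_leq q k) (leqnn d)) _.
  have le_qm : ((size q).-1 * k <= k * m)%N.
    by rewrite mulnC leq_mul2l -subn1 leq_subLR add1n le_q orbT.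
  have : (k.+1 * m <= (size p).-1 * m)%N by rewrite leq_mul2r lt_kn orbT.
  by rewrite mulSn; lia.
have -> : k = (size p).-1 by lia.
by rewrite -lead_coefE; apply: top_coefs_inZ => //; apply: top_coefs_inX.
Qed.

End TopCoefs.

Lemma deficit_le_size (K : fieldType) (F : {pred K}) (p : {poly K}) :
  (deficit F p <= (size p).-1)%N.
Proof. by rewrite /deficit; case: ifP => _ //; apply: leq_subr. Qed.

Lemma deficit_geP (K : fieldType) (F : addrClosed K) (p : {poly K}) (d : nat) :
    (d <= (size p).-1)%N ->
  (d <= deficit F p)%N <-> top_coefs_in F (size p).-1 d p.
Proof.
rewrite /deficit; case: ifP => [/polyOverP Fp | _] le_d.
  by split=> // _ i _; apply: Fp.
set M := \max_(k < size p | _) _.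
have le_M : (M <= (size p).-1)%N.
  by apply/bigmax_leqP => k _; have := ltn_ord k; lia.
split=> [le_dM i lt_id | Fp].
  have [lt_ip | ge_ip] := ltnP i (size p); last by rewrite nth_default ?rpred0.
  apply: contraT => notFi.
  have := leq_bigmax_cond (P := fun k : 'I_(size p) => p`_k \notin F)
    (F := @nat_of_ord _) (Ordinal lt_ip) notFi.
  by rewrite -/M /=; lia.
suff : (M + d <= (size p).-1)%N by lia.
have : (M <= (size p).-1 - d)%N.
  by apply/bigmax_leqP => k; apply: contraR => ?; apply: Fp; lia.
lia.
Qed.

Section DeficitComp.
Variables (K : fieldType) (F : {pred K}).
Hypothesis F_subfield : divring_closed F.
HB.instance Definition _ := GRing.isDivringClosed.Build K F F_subfield.

Lemma deficit_comp_poly (p q : {poly K}) :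
    (1 < size p)%N -> lead_coef p * lead_coef q \in F ->
  (deficit F q <= deficit F (p \Po q))%N.
Proof.
move=> p_nonconst Fpq; set m := (size q).-1; set d := deficit F q.
have [-> // | d_gt0] := posnP d.
have le_dm : (d <= m)%N by apply: deficit_le_size.
have Fq : top_coefs_in F m d q by apply/deficit_geP.
have Flq : lead_coef q \in F by rewrite lead_coefE Fq //; lia.
have lq_neq0 : lead_coef q != 0 by rewrite lead_coef_eq0 -size_poly_eq0; lia.
have Flp : lead_coef p \in F by rewrite -(mulfK lq_neq0 (lead_coef p)) rpred_div.
have le_dnm : (d <= (size p).-1 * m)%N.
  by apply: leq_trans le_dm _; rewrite leq_pmull //; lia.
apply/deficit_geP; rewrite size_comp_poly //.
by apply: top_coefs_in_comp => //; apply: leqSpred.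
Qed.

End DeficitComp.

Theorem theorem9 (K : fieldType) (F : {pred K})
  (Fsub : divring_closed F) (Fproper : exists x : K, x \notin F)
  (char0 : [pchar K] =i pred0)
  (p q : {poly K})
  (p_nonconst : (1 < size p)%N) (q_neq0 : q != 0)
  (lead_in_F : lead_coef p * lead_coef q \in F) :
  (deficit F (p \Po q) >= deficit F q)%N.
Proof. exact: deficit_comp_poly. Qed.
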